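(* Let $G$ be a hypo-efficient domination graph of order $n$. Then $G$ is connected, $n\geq 4$, and $2\leq\gamma(G)\leq n/2$. Furthermore, $\gamma(G)=n/2$ if and only if $G=C_4$.
   Context: All graphs are finite, simple and undirected. For $v\in V(G)$, $N[v]$ is the closed neighborhood of $v$. A set $D\subseteq V(G)$ is dominating if every vertex of $G$ not in $D$ has a neighbor in $D$; $\gamma(G)$ is the minimum size of a dominating set. A set $D\subseteq V(G)$ is an efficient dominating set (EDS) if $|N[v]\cap D|=1$ for every $v\in V(G)$. $G$ is a hypo-efficient domination graph if $G$ has no EDS but $G-v$ has at least one EDS for every $v\in V(G)$. *)

From mathcomp Require Import all_boot.
Set Implicit Arguments. Unset Strict Implicit. Unset Printing Implicit Defensive.

Definition simple_graph (T : finType) (e : rel T) : Prop :=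
  symmetric e /\ irreflexive e.

Definition cnbhd (T : finType) (e : rel T) (v : T) : {set T} :=
  [set u | (u == v) || e v u].

(* D is an efficient dominating set of the induced subgraph G[V]:
   D is a subset of V and |N_{G[V]}[v] ∩ D| = 1 for every v in V.
   (Since D ⊆ V, N_{G[V]}[v] ∩ D = N_G[v] ∩ D.) *)
Definition eds_in (T : finType) (e : rel T) (V D : {set T}) : Prop :=
  D \subset V /\ forall v, v \in V -> #|cnbhd e v :&: D| = 1.

Definition has_eds_in (T : finType) (e : rel T) (V : {set T}) : Prop :=
  exists D : {set T}, eds_in e V D.

Definition hypo_efficient (T : finType) (e : rel T) : Prop :=
  ~ has_eds_in e [set: T] /\ forall v : T, has_eds_in e [set~ v].

Definition dominating (T : finType) (e : rel T) (D : {set T}) : bool :=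
  [forall v, (v \in D) || [exists u in D, e v u]].

Definition gamma (T : finType) (e : rel T) : nat :=
  \big[minn/#|T|]_(D : {set T} | dominating e D) #|D|.

Definition connected_graph (T : finType) (e : rel T) : Prop :=
  forall x y : T, connect e x y.

Definition c4_rel : rel 'I_4 :=
  fun i j => (j == (i + 1) %% 4 :> nat) || (i == (j + 1) %% 4 :> nat).

Definition is_C4 (T : finType) (e : rel T) : Prop :=
  exists f : T -> 'I_4, bijective f /\ forall x y, e x y = c4_rel (f x) (f y).

(* If a set C closed under adjacency carries an efficient dominating set of
   G[C], it glues with an EDS of G - v (v in C) to an EDS of G; this gives
   connectivity and the absence of isolated vertices.  A dominating set with at
   most one vertex is itself efficient, so gamma >= 2, and Ore's bound gives
   2 gamma <= n.

   Assume n = 2 gamma and let D be an EDS of G - v missing N[v].  Then D + v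
   dominates while the sets N[d], d in D, partition V - v; this forces
   |D| = gamma - 1 and sum |N[d]| = 2|D| + 1, so all N[d] have two elements
   except one, which has three.  Swapping dominators for neighbours would give
   dominating sets of size gamma - 1, and ruling these out shows that a leaf
   would lie in a component P4, which has an EDS.  Hence every N[d] has three
   elements, |D| = 1, n = 4, and G is 2-regular on four vertices: G = C4. *)

From mathcomp Require Import all_boot zify.
Set Implicit Arguments. Unset Strict Implicit. Unset Printing Implicit Defensive.

Lemma bigmin_leq (I : eqType) (r : seq I) (P : pred I) (F : I -> nat) n0 j :
  j \in r -> P j -> \big[minn/n0]_(i <- r | P i) F i <= F j.
Proof.
elim: r => // i r IHr; rewrite inE big_cons => /predU1P[<- ->|jr Pj].
  exact: geq_minl.
by case: (P i); rewrite ?geq_min IHr ?orbT.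
Qed.

Lemma card_setI_sum (T : finType) (A B : {set T}) :
  #|A :&: B| = \sum_(x in B) (x \in A).
Proof.
rewrite -sum1_card [LHS]big_mkcond [RHS]big_mkcond; apply: eq_bigr => x _.
by rewrite inE; case: (x \in A); case: (x \in B).
Qed.

Lemma cardsI2 (T : finType) (A : {set T}) s t :
  s != t -> #|A :&: [set s; t]| = (s \in A) + (t \in A).
Proof. by move=> st; rewrite card_setI_sum big_setU1 ?big_set1 // inE. Qed.

Lemma cards3 (T : finType) (a b c : T) : uniq [:: a; b; c] -> #|[set a; b; c]| = 3.
Proof.
by rewrite /= !inE !negb_or -setUA cardsU1 cards2 !inE negb_or => /and3P[-> -> _].
Qed.

Lemma sum_excess_one (I : finType) (A : {set I}) (F : I -> nat) c :
  c \in A -> (forall i, i \in A -> 1 < F i) -> 2 < F c ->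
  \sum_(i in A) F i = (2 * #|A|).+1 ->
  F c = 3 /\ forall i, i \in A -> i != c -> F i = 2.
Proof.
move=> cA F2 Fc sumF.
have : \sum_(i in A) (F i - 2) + \sum_(i in A) 2 = (2 * #|A|).+1.
  by rewrite -big_split -sumF; apply: eq_bigr => i /F2 Fi /=; rewrite subnK.
rewrite sum_nat_const (bigD1 c) //= => excess.
have /eqP : \sum_(i in A | i != c) (F i - 2) = 0 by lia.
rewrite sum_nat_eq0 => /forallP rest; split; first lia.
by move=> i iA ic; move: (rest i) (F2 i iA); rewrite iA ic /= => /eqP Fi Fi2; lia.
Qed.

Section Graph.
Variables (T : finType) (e : rel T).

Lemma cnbhdE x v : (x \in cnbhd e v) = (x == v) || e v x.
Proof. by rewrite inE. Qed.

Lemma cnbhd_refl v : v \in cnbhd e v.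
Proof. by rewrite cnbhdE eqxx. Qed.

Lemma dominatingP (D : {set T}) :
  reflect (forall v, exists2 u, u \in D & u \in cnbhd e v) (dominating e D).
Proof.
apply: (iffP forallP) => [domD v | domD v].
  case/orP: (domD v) => [vD|/existsP[u /andP[uD evu]]].
    by exists v; rewrite ?cnbhd_refl.
  by exists u; rewrite // cnbhdE evu orbT.
have [u uD] := domD v; rewrite cnbhdE => /predU1P[<-|evu]; first by rewrite uD.
by apply/orP; right; apply/existsP; exists u; rewrite uD.
Qed.

Lemma gamma_min (D : {set T}) : dominating e D -> gamma e <= #|D|.
Proof. exact: bigmin_leq (mem_index_enum D). Qed.

Lemma gamma_attained : exists2 D, dominating e D & #|D| = gamma e.
Proof.
rewrite /gamma.
apply: (big_ind (fun n => exists2 D : {set T}, dominating e D & #|D| = n)) => [||D dD];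
  last by exists D.
  exists setT; rewrite ?cardsT //.
  by apply/dominatingP => v; exists v; rewrite ?cnbhd_refl ?inE.
move=> _ _ [D1 dD1 <-] [D2 dD2 <-]; case: (leqP #|D1| #|D2|) => D12.
  by exists D1; rewrite ?(minn_idPl D12).
by exists D2; rewrite ?(minn_idPr (ltnW D12)).
Qed.

Hypothesis sym : symmetric e.

Lemma cnbhd_sym x y : (x \in cnbhd e y) = (y \in cnbhd e x).
Proof. by rewrite !cnbhdE eq_sym sym. Qed.

Lemma eds_glue (C F D : {set T}) :
  (forall x y, x \in C -> e x y -> y \in C) -> F \subset C ->
  (forall x, x \in C -> #|cnbhd e x :&: F| = 1) ->
  (forall x, x \notin C -> #|cnbhd e x :&: D| = 1) ->
  has_eds_in e [set: T].
Proof.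
move=> closedC FC effF effD; exists (F :|: (D :\: C)); split; first exact: subsetT.
have nbhdC x y : y \in cnbhd e x -> (y \in C) = (x \in C).
  rewrite cnbhdE => /predU1P[-> //|exy].
  by apply/idP/idP => [yC|xC]; [apply: closedC yC _; rewrite sym | exact: closedC exy].
move=> x _; case xC: (x \in C).
  rewrite -(effF x xC); apply: eq_card => y; rewrite !inE.
  by case yN: (_ || _) => //=; rewrite -cnbhdE in yN; rewrite (nbhdC _ _ yN) xC orbF.
rewrite -(effD x (negbT xC)); apply: eq_card => y; rewrite !inE.
case yN: (_ || _) => //=; rewrite -cnbhdE in yN; rewrite (nbhdC _ _ yN) xC /=.
by case yF: (y \in F) => //; move/subsetP: FC => /(_ y yF); rewrite (nbhdC _ _ yN) xC.
Qed.

Section PuncturedEds.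
Variables (v : T) (D : {set T}).
Hypothesis effD : forall u, u != v -> #|cnbhd e u :&: D| = 1.

Lemma eds_dominator u : u != v -> exists2 d, d \in D & d \in cnbhd e u.
Proof.
move=> uv; have /card_gt0P[d] : 0 < #|cnbhd e u :&: D| by rewrite effD.
by rewrite inE => /andP[dN dD]; exists d.
Qed.

Lemma eds_dominator_uniq u d d' : u != v ->
  d \in D -> d \in cnbhd e u -> d' \in D -> d' \in cnbhd e u -> d = d'.
Proof.
move=> uv dD dN d'D d'N; move/eqP/cards1P: (effD uv) => [z Ez].
have : d' \in cnbhd e u :&: D by rewrite inE d'N d'D.
have : d \in cnbhd e u :&: D by rewrite inE dN dD.
by rewrite Ez !inE => /eqP-> /eqP->.
Qed.

Lemma sum_card_cnbhd_eds : \sum_(d in D) #|cnbhd e d :\ v| = #|T| - 1.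
Proof.
have -> : #|T| - 1 = \sum_(u in [set~ v]) 1 by rewrite sum1_card cardsC1; lia.
under eq_bigr => d _ do rewrite setDE card_setI_sum.
rewrite exchange_big; apply: eq_bigr => u; rewrite in_setC1 => uv.
by rewrite -(effD uv) card_setI_sum; apply: eq_bigr => d _; rewrite cnbhd_sym.
Qed.

End PuncturedEds.

Section Irreflexive.
Hypothesis irr : irreflexive e.

Lemma neq_of_edge x y : e x y -> x != y.
Proof. by apply: contraTneq => ->; rewrite irr. Qed.

Lemma in_cnbhdD1 x v : (x \in cnbhd e v :\ v) = e v x.
Proof. by rewrite in_setD1 cnbhdE; case: eqVneq => [->|]; rewrite ?irr. Qed.

Lemma card_cnbhd_gt1 v u : e v u -> 1 < #|cnbhd e v|.
Proof.
move=> evu; apply: leq_trans (subset_leq_card (_ : [set v; u] \subset _)).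
  by rewrite cards2 neq_of_edge.
by rewrite subUset !sub1set cnbhd_refl cnbhdE evu orbT.
Qed.

Lemma gamma_le_half : (forall v, exists u, e v u) -> 2 * gamma e <= #|T|.
Proof.
move=> nbr; have [D domD gD] := gamma_attained.
suff /gamma_min : dominating e (~: D) by rewrite cardsCs setCK -gD; lia.
apply/dominatingP => v; case vD: (v \in D); last by exists v; rewrite ?cnbhd_refl // inE vD.
have [/existsP[u /andP[uD uN]] | inD] := boolP [exists u in ~: D, u \in cnbhd e v].
  by exists u.
have NvD u : u \in cnbhd e v -> u \in D.
  by move=> uN; apply: contraR (existsPn inD u) => uD; rewrite inE uD.
suff /gamma_min : dominating e (D :\ v) by rewrite -gD (cardsD1 v D) vD; lia.
apply/dominatingP => x; have [u evu] := nbr v.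
have uv : u != v by rewrite eq_sym neq_of_edge.
have uNv : u \in cnbhd e v by rewrite cnbhdE evu orbT.
have [->|xv] := eqVneq x v; first by exists u; rewrite // !inE uv NvD.
have [d dD dN] := dominatingP _ domD x; have [dv|dv] := eqVneq d v.
  by exists x; rewrite ?cnbhd_refl // !inE xv NvD // cnbhd_sym -dv.
by exists d; rewrite // !inE dv.
Qed.

Lemma is_C4_of_4cycle a0 a1 a2 a3 : #|T| = 4 -> uniq [:: a0; a1; a2; a3] ->
  e a0 a1 -> e a1 a2 -> e a2 a3 -> e a3 a0 -> ~~ e a0 a2 -> ~~ e a1 a3 -> is_C4 e.
Proof.
move=> T4 a_uniq e01 e12 e23 e30 n02 n13.
pose g (i : 'I_4) := nth a0 [:: a0; a1; a2; a3] i.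
have g_inj : injective g by move=> i j /eqP; rewrite nth_uniq // => /eqP/val_inj.
have [f gK fK] : bijective g by apply: inj_card_bij g_inj _; rewrite card_ord T4.
exists f; split; first by exists g.
suff eg i j : e (g i) (g j) = c4_rel i j by move=> x y; rewrite -eg !fK.
case: i j => [[|[|[|[|i]]]] Hi] // [[|[|[|[|j]]]] Hj] //; rewrite /g /c4_rel /=;
  rewrite ?irr ?e01 ?e12 ?e23 ?e30 ?(negbTE n02) ?(negbTE n13) // sym;
  by rewrite ?e01 ?e12 ?e23 ?e30 ?(negbTE n02) ?(negbTE n13).
Qed.

Lemma is_C4_of_card_cnbhd3 : #|T| = 4 -> (forall x, #|cnbhd e x| = 3) -> is_C4 e.
Proof.
move=> T4 N3; have /card_gt0P[v _] : 0 < #|T| by rewrite T4.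
have N2 x : #|cnbhd e x :\ x| = 2 by have := N3 x; rewrite (cardsD1 x) cnbhd_refl; lia.
have /cards2P[u [w [uw Nv]]] : #|cnbhd e v :\ v| == 2 by rewrite N2.
have evu : e v u by rewrite -in_cnbhdD1 Nv set21.
have evw : e v w by rewrite -in_cnbhdD1 Nv set22.
have /cards1P[b Cv] : #|~: cnbhd e v| == 1.
  by have := cardsC (cnbhd e v); rewrite N3 T4; lia.
have bNv : b \notin cnbhd e v by rewrite -in_setC Cv set11.
have nvb : ~~ e v b by apply: contra bNv; rewrite cnbhdE => ->; rewrite orbT.
have [vb ub wb] : [/\ v != b, u != b & w != b].
  by split; apply: contraNneq bNv => <-; rewrite ?cnbhd_refl ?cnbhdE ?evu ?evw ?orbT.
have Nb : cnbhd e b :\ b = [set u; w].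
  apply/eqP; rewrite eqEcard N2 cards2 uw andbT -Nv.
  apply/subsetP => z; rewrite !in_cnbhdD1 => ebz.
  have : z \in cnbhd e v by apply/negPn; rewrite -in_setC Cv in_set1 eq_sym neq_of_edge.
  rewrite cnbhdE => /predU1P[zv|//].
  by move: ebz; rewrite zv sym (negbTE nvb).
have [ebu ebw] : e b u /\ e b w by rewrite -!in_cnbhdD1 Nb set21 set22.
have nuw : ~~ e u w.
  have Nu : cnbhd e u :\ u = [set v; b].
    apply/eqP; rewrite eq_sym eqEcard N2 cards2 vb andbT subUset !sub1set.
    by rewrite !in_cnbhdD1 sym evu sym ebu.
  by rewrite -in_cnbhdD1 Nu !inE negb_or eq_sym neq_of_edge.
apply: (is_C4_of_4cycle T4 _ evu _ ebw _ nvb nuw); rewrite 1?sym //.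
by rewrite /= !inE !negb_or (neq_of_edge evu) (neq_of_edge evw) vb ub uw eq_sym wb.
Qed.

End Irreflexive.

Section HypoEfficient.
Hypotheses (noE : ~ has_eds_in e [set: T]) (Dv : forall v, has_eds_in e [set~ v]).

Lemma punctured_eds v :
  exists2 D : {set T}, v \notin D & forall u, u != v -> #|cnbhd e u :&: D| = 1.
Proof.
have [D [Dsub effD]] := Dv v; exists D => [|u uv]; last by rewrite effD ?in_setC1.
by apply/negP => /(subsetP Dsub); rewrite !inE eqxx.
Qed.

Lemma hypo_connected : connected_graph e.
Proof.
move=> x y; apply/idPn => xy; apply: noE.
have [Dy _ effDy] := punctured_eds y; have [Dx _ effDx] := punctured_eds x.
pose C := [set z | connect e x z].
have closedC z w : z \in C -> e z w -> w \in C.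
  by rewrite !inE => xz ezw; apply: connect_trans xz (connect1 ezw).
apply: (@eds_glue C (Dy :&: C) Dx closedC (subsetIr _ _)) => z zC; last first.
  by apply: effDx; apply: contraNneq zC => ->; rewrite inE connect0.
have NzC : cnbhd e z \subset C.
  by apply/subsetP => w; rewrite cnbhdE => /predU1P[-> //|]; exact: closedC.
rewrite setIA (setIidPl (subset_trans (subsetIl _ _) NzC)).
by apply: effDy; apply: contraTneq zC => ->; rewrite inE (negbTE xy).
Qed.

Lemma hypo_no_isolated v : exists u, e v u.
Proof.
have [/existsP // | /existsPn isol] := boolP [exists u, e v u]; case: noE.
have [D _ effD] := punctured_eds v.
apply: (@eds_glue [set v] [set v] D) => [x y||x|x]; rewrite ?inE.
- by move=> /eqP-> evy; move: (isol y); rewrite evy.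
- by [].
- by move/eqP->; rewrite (setIidPr _) ?cards1 // sub1set cnbhd_refl.
- exact: effD.
Qed.

Lemma gamma_ge2 : 2 <= gamma e.
Proof.
have [D domD <-] := gamma_attained; rewrite ltnNge; apply: contra_notN noE.
move=> D1; exists D; split => [|x _]; first exact: subsetT.
have [u uD uN] := dominatingP _ domD x.
apply/eqP; rewrite eqn_leq (leq_trans (subset_leq_card (subsetIr _ _)) D1) card_gt0.
by apply/set0Pn; exists u; rewrite inE uN.
Qed.

Lemma no_P4_component x p c b : uniq [:: x; p; c; b] ->
  cnbhd e x = [set x; p] -> cnbhd e p = [set p; c; x] ->
  cnbhd e c = [set c; p; b] -> cnbhd e b = [set b; c] -> False.
Proof.
move=> /= + Nx Np Nc Nb; rewrite !inE !negb_or => /and4P[/and3P[xp xc xb] /andP[pc pb] cb _].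
have [D xD effD] := punctured_eds x; pose C := [set x; p; c; b].
have NC y : y \in C -> cnbhd e y \subset C /\ #|cnbhd e y :&: [set x; b]| = 1.
  rewrite !inE => /orP[/orP[/orP[]|]|] /eqP->; rewrite ?Nx ?Np ?Nc ?Nb cardsI2 //;
  rewrite !subUset !sub1set !inE -?(eq_sym x b) -?(eq_sym p b) -?(eq_sym c b);
  by rewrite ?eqxx ?(negbTE xp) ?(negbTE xc) ?(negbTE xb) ?(negbTE pb) ?(negbTE cb) ?orbT.
apply: noE; apply: (@eds_glue C [set x; b] D) => [y z yC eyz||y /NC[]//|y yC].
- by apply: (subsetP (NC y yC).1); rewrite cnbhdE eyz orbT.
- by rewrite !subUset !sub1set !inE !eqxx !orbT.
- by apply: effD; apply: contraNneq yC => ->; rewrite !inE eqxx.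
Qed.

Section Extremal.
Hypotheses (irr : irreflexive e) (half : #|T| = 2 * gamma e).

Lemma hypo_card_cnbhd_gt1 v : 1 < #|cnbhd e v|.
Proof. by have [u evu] := hypo_no_isolated v; exact: (card_cnbhd_gt1 irr evu). Qed.

Section Undominated.
Variables (v : T) (D : {set T}).
Hypotheses (effD : forall u, u != v -> #|cnbhd e u :&: D| = 1)
           (undomD : forall d, d \in D -> d \notin cnbhd e v).

Lemma cnbhd_undominated d : d \in D -> cnbhd e d :\ v = cnbhd e d.
Proof.
move=> dD; apply/setP => w; rewrite in_setD1 andb_idl // => wN.
by apply: contraTneq wN => ->; rewrite cnbhd_sym undomD.
Qed.

Lemma gamma_undominated : gamma e = #|D|.+1.
Proof.
apply/eqP; rewrite eqn_leq; apply/andP; split.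
  have domvD : dominating e (v |: D).
    apply/dominatingP => x; have [->|xv] := eqVneq x v.
      by exists v; rewrite ?setU11 ?cnbhd_refl.
    by have [d dD dN] := eds_dominator effD xv; exists d; rewrite // inE dD orbT.
  by apply: leq_trans (gamma_min domvD) _; rewrite cardsU1; case: (_ \notin _).
have : \sum_(d in D) 2 <= \sum_(d in D) #|cnbhd e d :\ v|.
  by apply: leq_sum => d dD; rewrite cnbhd_undominated // hypo_card_cnbhd_gt1.
by rewrite sum_nat_const sum_card_cnbhd_eds // half; have := gamma_ge2; lia.
Qed.

Lemma sum_card_cnbhd_undominated :
  \sum_(d in D) #|cnbhd e d| = (2 * #|D|).+1.
Proof.
under eq_bigr => d dD do rewrite -(cnbhd_undominated dD).
by rewrite sum_card_cnbhd_eds // half gamma_undominated; lia.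
Qed.

Lemma no_dominating_swap (R Q : {set T}) : R \subset D -> #|Q| <= #|R| ->
  (exists2 q, q \in Q & q \in cnbhd e v) ->
  (forall x r, r \in R -> r \in cnbhd e x -> exists2 q, q \in Q & q \in cnbhd e x) ->
  False.
Proof.
move=> RD QR [q qQ qN] RQ.
have domRQ : dominating e ((D :\: R) :|: Q).
  apply/dominatingP => x; have [->|xv] := eqVneq x v.
    by exists q; rewrite // inE qQ orbT.
  have [d dD dN] := eds_dominator effD xv; case dR: (d \in R).
    by have [q' q'Q q'N] := RQ x d dR dN; exists q'; rewrite // inE q'Q orbT.
  by exists d; rewrite // !inE dR dD.
have := leq_trans (gamma_min domRQ) (leq_card_setU _ _).1.
rewrite cardsD (setIidPr RD) gamma_undominated.
by have := subset_leq_card RD; lia.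
Qed.

Lemma cnbhd_dominator u c : e v u -> c \in D -> u \in cnbhd e c ->
  exists b, [/\ cnbhd e c = [set c; u; b], b \notin cnbhd e u
             & forall d, d \in D -> d != c -> #|cnbhd e d| = 2].
Proof.
move=> evu cD uNc.
have uD : u \notin D by apply: contraL (@undomD u) _; rewrite cnbhdE evu orbT.
have [b bNc bNu] : exists2 b, b \in cnbhd e c & b \notin cnbhd e u.
  have [/existsP[b /andP[bNc bNu]]|/existsPn sub] :=
    boolP [exists b, (b \in cnbhd e c) && (b \notin cnbhd e u)]; first by exists b.
  exfalso; apply: (@no_dominating_swap [set c] [set u]); rewrite ?sub1set ?cards1 //.
    by exists u; rewrite ?set11 // cnbhdE evu orbT.
  move=> x r /set1P-> cNx; exists u; rewrite ?set11 // cnbhd_sym.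
  by move: (sub x); rewrite -cnbhd_sym cNx negbK.
have cu : c != u by apply: contraNneq uD => <-.
have cb : c != b by apply: contraNneq bNu => <-; rewrite cnbhd_sym.
have ub : u != b by apply: contraNneq bNu => <-; rewrite cnbhd_refl.
have cub : uniq [:: c; u; b] by rewrite /= !inE negb_or cu cb ub.
have sub_cub : [set c; u; b] \subset cnbhd e c.
  by rewrite !subUset !sub1set cnbhd_refl uNc bNc.
have card_c : 2 < #|cnbhd e c| by rewrite -(cards3 cub) subset_leq_card.
have [c3 others] :=
  sum_excess_one cD (fun d _ => hypo_card_cnbhd_gt1 d) card_c sum_card_cnbhd_undominated.
exists b; split => //; apply/eqP; rewrite eq_sym eqEcard sub_cub.
by rewrite (cards3 cub) c3.
Qed.

End Undominated.

Section Leaf.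
Variables (x p : T) (D : {set T}).
Hypotheses (xp : x != p) (Nx : cnbhd e x = [set x; p]) (xD : x \notin D)
           (effD : forall u, u != x -> #|cnbhd e u :&: D| = 1).

Lemma leaf_support_notin_eds : p \notin D.
Proof.
apply: contra_notN noE => pD; exists D; split => [|y _]; first exact: subsetT.
have [->|yx] := eqVneq y x; last exact: effD.
by rewrite Nx setIC cardsI2 // (negbTE xD) pD.
Qed.

Lemma leaf_undominated d : d \in D -> d \notin cnbhd e x.
Proof.
move=> dD; rewrite Nx !inE negb_or.
by apply/andP; split; apply: contraTneq dD => ->; rewrite ?xD ?leaf_support_notin_eds.
Qed.

Lemma leaf_path_end c b : c \in D -> cnbhd e c = [set c; p; b] -> b \notin cnbhd e p ->
  (forall d, d \in D -> d != c -> #|cnbhd e d| = 2) -> cnbhd e b \subset [set b; c].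
Proof.
move=> cD Nc bNp others; apply/subsetP => w wNb; apply/idPn; rewrite !inE negb_or => /andP[wb wc].
have bNc : b \in cnbhd e c by rewrite Nc !inE eqxx orbT.
have bx : b != x by apply: contraTneq bNc => ->; rewrite cnbhd_sym leaf_undominated.
have wx : w != x.
  apply: contraNneq bNp => wx; move: wNb; rewrite wx cnbhd_sym Nx => /set2P[bx'|->].
    by rewrite bx' eqxx in bx.
  exact: cnbhd_refl.
have wD : w \notin D.
  apply: contra wc => wD; apply/eqP; apply: (eds_dominator_uniq effD bx) => //.
  by rewrite cnbhd_sym.
have [f fD fNw] := eds_dominator effD wx.
have fc : f != c.
  apply: contraNneq bNp => fc; have wNc : w \in cnbhd e c by rewrite -fc cnbhd_sym.
  rewrite Nc !inE (negbTE wc) (negbTE wb) orbF in wNc.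
  by rewrite -(eqP wNc) cnbhd_sym.
have fw : f != w by apply: contraNneq wD => <-.
have Nf : cnbhd e f = [set f; w].
  apply/eqP; rewrite eq_sym eqEcard others // cards2 fw subUset !sub1set.
  by rewrite cnbhd_refl cnbhd_sym fNw.
apply: (no_dominating_swap effD leaf_undominated (R := [set c; f]) (Q := [set p; w])).
- by rewrite subUset !sub1set cD fD.
- by rewrite !cards2 [c == f]eq_sym fc; case: (_ != _).
- by exists p; rewrite ?set21 // Nx set22.
- move=> y r /set2P[]-> rNy; rewrite cnbhd_sym in rNy.
  + move: rNy; rewrite Nc !inE => /orP[/orP[]|] /eqP->.
    * by exists p; rewrite ?set21 // Nc !inE eqxx orbT.
    * by exists p; rewrite ?set21 ?cnbhd_refl.
    * by exists w; rewrite ?set22 // cnbhd_sym.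
  + move: rNy; rewrite Nf !inE => /orP[] /eqP->.
    * by exists w; rewrite ?set22 // Nf set22.
    * by exists w; rewrite ?set22 ?cnbhd_refl.
Qed.

End Leaf.

Lemma leaf_path x p : x != p -> cnbhd e x = [set x; p] ->
  exists c b, [/\ uniq [:: x; p; c; b], cnbhd e c = [set c; p; b]
               & cnbhd e b = [set b; c]].
Proof.
move=> xp Nx; have [D xD effD] := punctured_eds x.
have pD := leaf_support_notin_eds xp Nx xD effD.
have undomD := leaf_undominated xp Nx xD effD.
have exp : e x p by move: (set22 x p); rewrite -Nx cnbhdE eq_sym (negbTE xp).
have px : p != x by rewrite eq_sym.
have [c cD cNp] := eds_dominator effD px.
have pNc : p \in cnbhd e c by rewrite cnbhd_sym.
have [b [Nc bNp others]] := cnbhd_dominator effD undomD exp cD pNc.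
have bNc : b \in cnbhd e c by rewrite Nc !inE eqxx orbT.
exists c, b; split => //.
  have xc : x != c by apply: contraNneq xD => ->.
  have xb : x != b by apply: contraNneq (undomD c cD) => ->; rewrite cnbhd_sym.
  have pc : p != c by apply: contraNneq pD => ->.
  have pb : p != b by apply: contraNneq bNp => <-; rewrite cnbhd_refl.
  have cb : c != b by apply: contraNneq bNp => <-.
  by rewrite /= !inE !negb_or xp xc xb pc pb cb.
apply/eqP; rewrite eqEsubset (leaf_path_end xp Nx xD effD cD Nc bNp others).
by rewrite subUset !sub1set cnbhd_refl cnbhd_sym bNc.
Qed.

Lemma hypo_card_cnbhd_gt2 x : 2 < #|cnbhd e x|.
Proof.
rewrite ltnNge; apply/negP => Nx2; have [p exp] := hypo_no_isolated x.
have xp := neq_of_edge irr exp.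
have Nx : cnbhd e x = [set x; p].
  apply/eqP; rewrite eq_sym eqEcard cards2 xp Nx2 subUset !sub1set.
  by rewrite cnbhd_refl cnbhdE exp orbT.
have [c [b [uniq4 Nc Nb]]] := leaf_path xp Nx.
move: (uniq4); rewrite /= !inE !negb_or => /and4P[/and3P[_ xc _] /andP[pc _] cb _].
have bc : b != c by rewrite eq_sym.
(* The leaf b yields a path b c c' b' with a leaf b', which must be b c p x. *)
have [c' [b' [uniq4' Nc' _]]] := leaf_path bc Nb.
move: uniq4'; rewrite /= !inE !negb_or => /and4P[/and3P[_ bc' _] /andP[cc' _] _ _].
have c'p : c' = p.
  have : c' \in cnbhd e c by rewrite cnbhd_sym Nc' !inE eqxx orbT.
  rewrite Nc !inE => /orP[/orP[]|] /eqP // c'E.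
    by rewrite c'E eqxx in cc'.
  by rewrite c'E eqxx in bc'.
rewrite c'p in Nc'; have b'x : b' = x.
  have : x \in cnbhd e p by rewrite cnbhd_sym Nx set22.
  rewrite Nc' !inE => /orP[/orP[]|] /eqP // xE.
    by rewrite xE eqxx in xp.
  by rewrite xE eqxx in xc.
by rewrite b'x in Nc'; apply: (no_P4_component uniq4 Nx Nc' Nc Nb).
Qed.

Lemma extremal_undominated v D : (forall u, u != v -> #|cnbhd e u :&: D| = 1) ->
  forall d, d \in D -> d \notin cnbhd e v.
Proof.
move=> effD d dD; apply/negP => dNv.
have domD : dominating e D.
  apply/dominatingP => u; have [->|uv] := eqVneq u v; first by exists d.
  exact: (eds_dominator effD uv).
have : \sum_(d in D) 2 <= \sum_(d in D) #|cnbhd e d :\ v|.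
  apply: leq_sum => d' _; have := hypo_card_cnbhd_gt2 d'.
  by rewrite (cardsD1 v (cnbhd e d')); case: (_ \in _); lia.
rewrite sum_nat_const sum_card_cnbhd_eds // half.
by have := gamma_min domD; have := gamma_ge2; lia.
Qed.

Lemma extremal_card : #|T| = 4.
Proof.
have /card_gt0P[v _] : 0 < #|T| by rewrite half; have := gamma_ge2; lia.
have [D _ effD] := punctured_eds v; have undomD := extremal_undominated effD.
have : \sum_(d in D) 3 <= \sum_(d in D) #|cnbhd e d|.
  by apply: leq_sum => d _; exact: hypo_card_cnbhd_gt2.
rewrite sum_nat_const (sum_card_cnbhd_undominated effD undomD) half.
by have := gamma_undominated effD undomD; have := gamma_ge2; lia.
Qed.

Lemma extremal_card_cnbhd x : #|cnbhd e x| = 3.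
Proof.
apply/eqP; rewrite eqn_leq hypo_card_cnbhd_gt2 andbT leqNgt; apply/negP => N4.
have NT : cnbhd e x = [set: T].
  by apply/eqP; rewrite eqEcard subsetT cardsT extremal_card.
have domx : dominating e [set x].
  by apply/dominatingP => y; exists x; rewrite ?set11 // cnbhd_sym NT inE.
by have := gamma_min domx; have := gamma_ge2; rewrite cards1; lia.
Qed.

End Extremal.
End HypoEfficient.
End Graph.

Unset Implicit Arguments.

Theorem proposition3p8 (T : finType) (e : rel T) :
  simple_graph e -> hypo_efficient e ->
  [/\ connected_graph e,
      4 <= #|T|,
      2 <= gamma e,
      2 * gamma e <= #|T|
    & (2 * gamma e = #|T| <-> is_C4 e)].
Proof.
move=> [sym irr] [noE Dv].
have g2 := gamma_ge2 noE.
have half_le := gamma_le_half sym irr (hypo_no_isolated sym noE Dv).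
split; [exact: hypo_connected sym noE Dv | lia | done | done | split].
- move=> /esym half; apply: (is_C4_of_card_cnbhd3 sym irr).
    exact: extremal_card sym noE Dv irr half.
  exact: extremal_card_cnbhd sym noE Dv irr half.
- by case=> f [/bij_eq_card]; rewrite card_ord => T4 _; lia.
Qed.
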